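(* Let $k=12a+b+\frac12$ with $a\in\mathbb Z$ and $b\in\{6,8,9,10,11,12,13,14,15,16,17,19\}$, and let $m$ be an integer such that either $m\equiv0\pmod4$, or $m\equiv1\pmod4$ and $k+\frac12$ is even, or $m\equiv3\pmod4$ and $k+\frac12$ is odd. If $m\ge4.8|a|$, then: (i) if $\theta\in(\frac\pi3,\frac{5\pi}{12}]$, then $|\mathcal C_{m,k}(\theta)|<\sqrt2$; (ii) if $\theta\in[\frac{7\pi}{12},\frac{2\pi}3)$, then $|\mathcal D_{m,k}(\theta)|<\sqrt2$.
   Context: Define $c_{m,k}=1+i$ if $m\equiv0\ (4)$ and $k+\frac12$ odd; $c_{m,k}=1-i$ if $m\equiv0\ (4)$ and $k+\frac12$ even; $c_{m,k}=0$ if $m\equiv1\ (4)$ and $k+\frac12$ even, or $m\equiv3\ (4)$ and $k+\frac12$ odd. Define $d_{m,k}=1-i$ if $m\equiv1\ (4)$ and $k+\frac12$ even; $d_{m,k}=1+i$ if $m\equiv3\ (4)$ and $k+\frac12$ odd; $d_{m,k}=0$ if $m\equiv0\ (4)$. Set $\mathcal C_{m,k}(\theta)=-c_{m,k}(2i)^{-k}(\sin\frac\theta2)^{-k}e^{-\frac{\pi im}4}e^{\frac{\pi m}2\left(\frac1{2\tan(\theta/2)}-\sin\theta\right)}$ and $\mathcal D_{m,k}(\theta)=-d_{m,k}2^{-k}(\cos\frac\theta2)^{-k}e^{\frac{\pi im}4}e^{\frac{\pi m}2\left(\frac{\tan(\theta/2)}2-\sin\theta\right)}$, with principal branches of complex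 powers. *)

From Stdlib Require Import Reals ZArith List.
From Coquelicot Require Import Coquelicot.
Open Scope R_scope.

Definition cexp (z : C) : C :=
  (exp (Re z) * cos (Im z), exp (Re z) * sin (Im z)).

Definition Carg (z : C) : R :=
  if Rle_dec 0 (Im z) then acos (Re z / Cmod z) else - acos (Re z / Cmod z).

Definition Clog (z : C) : C := (ln (Cmod z), Carg z).

(* principal branch of complex power z^w (0^w := 0, irrelevant here) *)
Definition Cpow (z w : C) : C :=
  if Req_EM_T (Cmod z) 0 then 0%C else cexp (w * Clog z).

(* Throughout, n : Z stands for the integer k + 1/2, i.e. k = n - 1/2. *)
Definition kval (n : Z) : R := IZR n - / 2.

(* c_{m,k}; cases not covered by the paper's definition default to 0 *)
Definition c_mk (m n : Z) : C :=
  if Z.eqb (m mod 4) 0 then (if Z.odd n then (1, 1) else (1, -1))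
  else 0%C.

(* d_{m,k}; cases not covered by the paper's definition default to 0 *)
Definition d_mk (m n : Z) : C :=
  if Z.eqb (m mod 4) 1 then (if Z.odd n then 0%C else (1, -1))
  else if Z.eqb (m mod 4) 3 then (if Z.odd n then (1, 1) else 0%C)
  else 0%C.

Definition calC (m n : Z) (theta : R) : C :=
  - c_mk m n
  * Cpow (RtoC 0 + Ci * 2)%C (RtoC (- kval n))
  * Cpow (RtoC (sin (theta / 2))) (RtoC (- kval n))
  * cexp (RtoC (- PI * IZR m / 4) * Ci)%C
  * RtoC (exp (PI * IZR m / 2 * (1 / (2 * tan (theta / 2)) - sin theta))).

Definition calD (m n : Z) (theta : R) : C :=
  - d_mk m n
  * Cpow (RtoC 2) (RtoC (- kval n))
  * Cpow (RtoC (cos (theta / 2))) (RtoC (- kval n))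
  * cexp (RtoC (PI * IZR m / 4) * Ci)%C
  * RtoC (exp (PI * IZR m / 2 * (tan (theta / 2) / 2 - sin theta))).

From Pilot Require Import Defs.
From Stdlib Require Import Reals ZArith List Lra Lia Psatz.
From Coquelicot Require Import Coquelicot.
Import ListNotations.
Open Scope R_scope.

(* Write s, c for the sine and cosine of the half angle (swapped for D).  Both
   moduli equal sqrt 2 * exp (- k ln (2s) - 5/2 m y) with
   y = pi c (4s^2 - 1) / (10 s), and on the given angle ranges 1/2 < s and
   s^2 <= 0.3706.  There a cubic Taylor bound for exp, fed with a chord lower
   bound for c, gives ln (2s) <= y.  Since m >= 4.8 |a|, the term 5/2 m y then
   dominates 12 |a| ln (2s), so the exponent is at most -(b + 1/2) ln (2s) < 0. *)

Lemma PI_ge_31415 : 3.1415 <= PI.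
Proof.
  destruct (PI_2_3_7_ineq 2) as [H _].
  unfold sum_f_R0, tg_alt, PI_2_3_7_tg, Ratan_seq in H; simpl in H.
  lra.
Qed.

Lemma exp_ge_cubic (y : R) : 0 <= y -> 1 + y + y^2/2 + y^3/6 <= exp y.
Proof. intros Hy; pose proof (exp_ge_taylor y 3 Hy) as H; simpl in H; lra. Qed.

Lemma cos_5PI12_ge : 0.2588 <= cos (5 * PI / 12).
Proof.
  replace (5 * PI / 12) with (PI / 4 + PI / 6) by field.
  rewrite cos_plus, cos_PI4, sin_PI4, cos_PI6, sin_PI6.
  pose proof (sqrt_sqrt 2 ltac:(lra)); pose proof (sqrt_sqrt 3 ltac:(lra)).
  pose proof (sqrt_lt_R0 2 ltac:(lra)); pose proof (sqrt_lt_R0 3 ltac:(lra)).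
  assert (1.73205 <= sqrt 3) by nra.
  assert (sqrt 2 <= 1.41422) by nra.
  apply Rmult_le_reg_r with (2 * sqrt 2); [lra|].
  field_simplify; [nra | lra].
Qed.

(* Positivity certificate on [0, 0.2176]: with w = 0.2176 - u, the difference
   is a nonnegative combination of the monomials u^i w^(8-i). *)
Lemma half_angle_certificate (u : R) : 0 <= u <= 0.2176 ->
  let W := 3.1415 * (0.866 - 0.335 * u) * (u + 2) in
  let D := 5 * (1 + u) in
  D^3 <= W * D^2 + u * W^2 * D / 2 + u^2 * W^3 / 6.
Proof.
  intros Hu W D; unfold W, D.
  set (w := 0.2176 - u).
  assert (mono : forall i j, 0 <= u ^ i * w ^ j)
    by (intros; apply Rmult_le_pos; apply pow_le; unfold w; lra).
  pose proof (mono 0 8)%nat; pose proof (mono 1 7)%nat; pose proof (mono 2 6)%nat;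
  pose proof (mono 3 5)%nat; pose proof (mono 4 4)%nat; pose proof (mono 5 3)%nat;
  pose proof (mono 6 2)%nat; pose proof (mono 7 1)%nat; pose proof (mono 8 0)%nat.
  assert (Hu' : u = 0.2176 - w) by (unfold w; ring).
  clearbody w; subst u; simpl in *; lra.
Qed.

Lemma Cmod_cexp (z : C) : Cmod (Defs.cexp z) = exp (Re z).
Proof.
  unfold Cmod, Defs.cexp, Re, Im; cbn [fst snd].
  pose proof (sin2_cos2 (snd z)) as H; unfold Rsqr in H.
  replace ((exp (fst z) * cos (snd z)) ^ 2 + (exp (fst z) * sin (snd z)) ^ 2)
    with (exp (fst z) ^ 2).
  - apply sqrt_pow2; left; apply exp_pos.
  - rewrite <- (Rmult_1_r (exp (fst z) ^ 2)), <- H; ring.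
Qed.

Lemma Cmod_cexp_imag (r : R) : Cmod (Defs.cexp (RtoC r * Ci)) = 1.
Proof. rewrite Cmod_cexp; simpl; replace (r * 0 - 0 * 1) with 0 by ring; apply exp_0. Qed.

Lemma Cmod_Cpow_real (z : C) (r : R) :
  Cmod z <> 0 -> Cmod (Defs.Cpow z (RtoC r)) = exp (r * ln (Cmod z)).
Proof.
  intros Hz; unfold Defs.Cpow.
  destruct (Req_EM_T (Cmod z) 0) as [e|_]; [contradiction|].
  rewrite Cmod_cexp; unfold Defs.Clog; simpl; f_equal; ring.
Qed.

Lemma Cmod_1_pm_i (e : R) : e * e = 1 -> Cmod (1, e) = sqrt 2.
Proof. intros He; unfold Cmod; simpl; f_equal; nra. Qed.

Lemma Cmod_c_mk (m n : Z) : Cmod (c_mk m n) = sqrt 2 \/ Cmod (c_mk m n) = 0.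
Proof.
  unfold c_mk; destruct (Z.eqb (m mod 4) 0); [destruct (Z.odd n)|].
  all: (left; apply Cmod_1_pm_i; lra) || (right; apply Cmod_0).
Qed.

Lemma Cmod_d_mk (m n : Z) : Cmod (d_mk m n) = sqrt 2 \/ Cmod (d_mk m n) = 0.
Proof.
  unfold d_mk; destruct (Z.eqb (m mod 4) 1);
    [| destruct (Z.eqb (m mod 4) 3)]; try destruct (Z.odd n).
  all: (left; apply Cmod_1_pm_i; lra) || (right; apply Cmod_0).
Qed.

Lemma Cmod_2i : Cmod (RtoC 0 + Ci * 2)%C = 2.
Proof.
  unfold Cmod; simpl.
  match goal with |- sqrt ?x = _ => replace x with (2 ^ 2) by ring end.
  apply sqrt_pow2; lra.
Qed.

Section HalfAngle.

Variables s c : R.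
Hypothesis s_gt : 1 / 2 < s.
Hypothesis c_gt0 : 0 < c.
Hypothesis sin2_cos2_sc : s * s + c * c = 1.
Hypothesis s2_le : s * s <= 0.3706.

Lemma s_le : s <= 0.6088.
Proof. nra. Qed.

(* The chord on [0, 0.2176] of the concave u |-> sqrt (1 - (1 + u)^2 / 4), u = 2s - 1. *)
Lemma cos_half_ge_chord : 0.866 - 0.335 * (2 * s - 1) <= c.
Proof.
  pose proof s_le.
  assert (0 <= (2 * s - 1) * (0.2176 - (2 * s - 1))) by nra.
  assert ((0.866 - 0.335 * (2 * s - 1)) ^ 2 <= c ^ 2) by nra.
  nra.
Qed.

Lemma double_le_exp_margin : 2 * s <= exp (PI * c * (4 * s * s - 1) / (10 * s)).
Proof.
  pose proof s_le; pose proof cos_half_ge_chord; pose proof PI_ge_31415.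
  set (u := 2 * s - 1) in *.
  assert (Hu : 0 < u <= 0.2176) by (unfold u; lra).
  set (y := PI * c * (4 * s * s - 1) / (10 * s)).
  set (W := 3.1415 * (0.866 - 0.335 * u) * (u + 2)); set (D := 5 * (1 + u)).
  assert (HD : 0 < D) by (unfold D; lra).
  assert (HW : 0 < W) by (unfold W; nra).
  set (X := W / D).
  assert (HX0 : 0 <= X) by (unfold X; apply Rlt_le, Rdiv_lt_0_compat; lra).
  assert (HuX : u * X <= y).
  { assert (Hy : y = PI * c * (u * (u + 2)) / D) by (unfold y, D, u; field; lra).
    rewrite Hy; unfold X, W; apply Rmult_le_reg_r with D; [lra|].
    field_simplify; [|lra|lra].
    assert (0 <= u * (u + 2)) by nra.
    assert (3.1415 * (0.866 - 0.335 * u) <= PI * c) by nra.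
    nra. }
  assert (HX : 1 <= X + u * X^2 / 2 + u^2 * X^3 / 6).
  { pose proof (half_angle_certificate u ltac:(lra)) as HP; simpl in HP; fold W D in HP.
    unfold X; apply Rmult_le_reg_r with (D ^ 3); [apply pow_lt; lra|].
    field_simplify; lra. }
  assert (0 <= u * X) by (apply Rmult_le_pos; lra).
  pose proof (exp_ge_cubic y ltac:(lra)).
  assert ((u * X) ^ 2 <= y ^ 2) by (apply pow_incr; lra).
  assert ((u * X) ^ 3 <= y ^ 3) by (apply pow_incr; lra).
  assert (u <= u * X + (u * X) ^ 2 / 2 + (u * X) ^ 3 / 6).
  { replace (u * X + (u * X) ^ 2 / 2 + (u * X) ^ 3 / 6)
      with (u * (X + u * X^2 / 2 + u^2 * X^3 / 6)) by field.
    nra. }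
  unfold u in *; lra.
Qed.

Lemma exponent_neg (a b m : Z) :
  (6 <= b)%Z -> IZR m >= 48 / 10 * IZR (Z.abs a) ->
  - kval (12 * a + b + 1) * ln 2 + - kval (12 * a + b + 1) * ln s
    + PI * IZR m / 2 * (c / (2 * s) - 2 * s * c) < 0.
Proof.
  intros Hb Hm; apply IZR_le in Hb; rewrite abs_IZR in Hm.
  assert (Hk : kval (12 * a + b + 1) = 12 * IZR a + IZR b + 1 / 2)
    by (unfold kval; rewrite !plus_IZR, mult_IZR; lra).
  assert (HL : ln 2 + ln s = ln (2 * s)) by (rewrite ln_mult; lra).
  assert (HL0 : 0 < ln (2 * s)) by (rewrite <- ln_1; apply ln_increasing; lra).
  pose proof double_le_exp_margin as Hmargin.
  set (y := PI * c * (4 * s * s - 1) / (10 * s)) in *.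
  assert (HLy : ln (2 * s) <= y) by (rewrite <- (ln_exp y); apply ln_le; lra).
  assert (HE : PI * IZR m / 2 * (c / (2 * s) - 2 * s * c) = - (5 / 2) * IZR m * y)
    by (unfold y; field; lra).
  rewrite Hk, HE.
  replace (- (12 * IZR a + IZR b + 1 / 2) * ln 2 + - (12 * IZR a + IZR b + 1 / 2) * ln s)
    with (- (12 * IZR a + IZR b + 1 / 2) * ln (2 * s)) by (rewrite <- HL; ring).
  set (L := ln (2 * s)) in *; set (A := IZR a) in *.
  pose proof (Rle_abs A); pose proof (Rabs_pos A).
  assert (- A <= Rabs A) by (rewrite <- Rabs_Ropp; apply Rle_abs).
  (* 5/2 m y >= 12 |a| y >= 12 |a| L cancels the possibly negative -12 a L. *)
  assert (0 <= (IZR m - 4.8 * Rabs A) * y) by (apply Rmult_le_pos; lra).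
  assert (0 <= Rabs A * (y - L)) by (apply Rmult_le_pos; lra).
  assert (0 <= (Rabs A + A) * L) by (apply Rmult_le_pos; lra).
  assert (0 <= (IZR b - 6) * L) by (apply Rmult_le_pos; lra).
  lra.
Qed.

Lemma Cmod_profile_lt (coef w : C) (a b m : Z) (r : R) :
  (6 <= b)%Z -> IZR m >= 48 / 10 * IZR (Z.abs a) ->
  (Cmod coef = sqrt 2 \/ Cmod coef = 0) -> Cmod w = 2 ->
  Cmod (- coef * Defs.Cpow w (RtoC (- kval (12 * a + b + 1)))
          * Defs.Cpow (RtoC s) (RtoC (- kval (12 * a + b + 1)))
          * Defs.cexp (RtoC r * Ci)
          * RtoC (exp (PI * IZR m / 2 * (c / (2 * s) - 2 * s * c)))) < sqrt 2.
Proof.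
  intros Hb Hm Hcoef Hw.
  pose proof (sqrt_lt_R0 2 ltac:(lra)).
  rewrite !Cmod_mult, Cmod_opp.
  destruct Hcoef as [E|E]; rewrite E; [| rewrite !Rmult_0_l; lra].
  assert (Hs : Cmod (RtoC s) = s) by (rewrite Cmod_R, Rabs_pos_eq; lra).
  assert (He : forall x, Cmod (RtoC (exp x)) = exp x)
    by (intros; rewrite Cmod_R, Rabs_pos_eq; [|left; apply exp_pos]; reflexivity).
  rewrite !Cmod_Cpow_real, Hw, Hs, He, Cmod_cexp_imag by lra.
  rewrite Rmult_1_r, !Rmult_assoc, <- !exp_plus.
  rewrite <- (Rmult_1_r (sqrt 2)) at 2; apply Rmult_lt_compat_l; [lra|].
  rewrite <- exp_0; apply exp_increasing.
  pose proof (exponent_neg a b m Hb Hm); lra.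
Qed.

End HalfAngle.

(* 0.3706 = (1 - 0.2588) / 2, the half-angle formula at theta = 5 pi / 12. *)
Lemma half_angle_bounds (theta : R) : PI / 3 < theta <= 5 * PI / 12 ->
  1 / 2 < sin (theta / 2) /\ 0 < cos (theta / 2)
  /\ sin (theta / 2) * sin (theta / 2) + cos (theta / 2) * cos (theta / 2) = 1
  /\ sin (theta / 2) * sin (theta / 2) <= 0.3706.
Proof.
  intros Htheta; pose proof PI_RGT_0.
  assert (0 < sin (theta / 2)) by (apply sin_gt_0; lra).
  assert (0 < cos (theta / 2)) by (apply cos_gt_0; lra).
  pose proof (sin2_cos2 (theta / 2)) as Hsc; unfold Rsqr in Hsc.
  assert (Hcos : cos theta = 1 - 2 * sin (theta / 2) * sin (theta / 2))
    by (rewrite <- cos_2a_sin; f_equal; field).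
  assert (cos theta < 1 / 2) by (rewrite <- cos_PI3; apply cos_decreasing_1; lra).
  assert (cos (5 * PI / 12) <= cos theta) by (apply cos_decr_1; lra).
  pose proof cos_5PI12_ge.
  repeat split; nra.
Qed.

Lemma half_angle_bounds_supp (theta : R) : 7 * PI / 12 <= theta < 2 * PI / 3 ->
  1 / 2 < cos (theta / 2) /\ 0 < sin (theta / 2)
  /\ cos (theta / 2) * cos (theta / 2) + sin (theta / 2) * sin (theta / 2) = 1
  /\ cos (theta / 2) * cos (theta / 2) <= 0.3706.
Proof.
  intros Htheta.
  replace (theta / 2) with (PI / 2 - (PI - theta) / 2) by field.
  rewrite cos_shift, sin_shift.
  apply half_angle_bounds; lra.
Qed.

Lemma half_angle_tan_expr (theta : R) :
  0 < sin (theta / 2) -> 0 < cos (theta / 2) ->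
  1 / (2 * tan (theta / 2)) - sin theta
    = cos (theta / 2) / (2 * sin (theta / 2)) - 2 * sin (theta / 2) * cos (theta / 2)
  /\ tan (theta / 2) / 2 - sin theta
    = sin (theta / 2) / (2 * cos (theta / 2)) - 2 * cos (theta / 2) * sin (theta / 2).
Proof.
  intros Hs Hc; unfold tan.
  replace (sin theta) with (2 * sin (theta / 2) * cos (theta / 2))
    by (rewrite <- sin_2a; f_equal; field).
  split; field; lra.
Qed.

Theorem lemma6p1 (a b m : Z) :
  In b [6; 8; 9; 10; 11; 12; 13; 14; 15; 16; 17; 19]%Z ->
  let n := (12 * a + b + 1)%Z in   (* n = k + 1/2, where k = 12a + b + 1/2 *)
  ((m mod 4 = 0)%Z \/ ((m mod 4 = 1)%Z /\ Z.even n = true)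
                   \/ ((m mod 4 = 3)%Z /\ Z.odd n = true)) ->
  IZR m >= 48 / 10 * IZR (Z.abs a) ->
  (forall theta, PI / 3 < theta <= 5 * PI / 12 -> Cmod (calC m n theta) < sqrt 2) /\
  (forall theta, 7 * PI / 12 <= theta < 2 * PI / 3 -> Cmod (calD m n theta) < sqrt 2).
Proof.
  (* The congruence condition only makes the coefficient nonzero; the bound
     holds either way. *)
  intros Hb n _ Hm; subst n.
  assert (Hb6 : (6 <= b)%Z) by (simpl in Hb; intuition lia).
  split; intros theta Htheta.
  - destruct (half_angle_bounds theta Htheta) as (Hs & Hc & Hsc & Hs2).
    unfold calC; rewrite (proj1 (half_angle_tan_expr theta ltac:(lra) Hc)).
    apply Cmod_profile_lt; [assumption .. | apply Cmod_c_mk | apply Cmod_2i].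
  - destruct (half_angle_bounds_supp theta Htheta) as (Hs & Hc & Hsc & Hs2).
    unfold calD; rewrite (proj2 (half_angle_tan_expr theta Hc ltac:(lra))).
    apply Cmod_profile_lt; [assumption .. | apply Cmod_d_mk |].
    rewrite Cmod_R, Rabs_pos_eq; lra.
Qed.
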